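(* Let $C^+$ be a mixed-characteristic valuation ring whose $p$-adic completion is a perfectoid ring, let $C^{+\flat}$ and $d\in C^{+\flat}$ be as in the context, let $E^+$ be a valuation ring extension of $C^+$, and let $E^{+\flat}$ be a $d$-adically complete flat $C^{+\flat}$-algebra. Assume there is an isomorphism of $C^{+\flat}/d=C^+/p$-algebras $E^{+\flat}/d\cong E^+/p$. Then $E^{+\flat}$ is a valuation ring extension of $C^{+\flat}$.
   Context: $p$ is a prime. A valuation ring $C^+$ is mixed-characteristic if $p$ is neither invertible nor zero in it. A valuation ring extension of a valuation ring $V$ is a valuation ring with an injective (equivalently flat) ring map from $V$. $C^{+\flat}:=\lim_{x\mapsto x^p}C^+/p$ is the tilt, a perfect valuation ring of characteristic $p$; one fixes $d\in C^{+\flat}$ such that $C^{+\flat}$ is $d$-adically complete and there is a natural ring isomorphism $C^+/p\cong C^{+\flat}/d$. *)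

From HB Require Import structures.
From mathcomp Require Import all_boot all_order all_algebra.
Set Implicit Arguments. Unset Strict Implicit. Unset Printing Implicit Defensive.
Import Order.TTheory GRing.Theory.
Local Open Scope ring_scope.

Definition rdvd (R : comNzRingType) (x y : R) : Prop := exists z : R, y = z * x.

Definition cong (R : comNzRingType) (a x y : R) : Prop := rdvd a (x - y).

(* Valuation ring: an integral domain in which, for all x y, x | y or y | x.
   (comNzRingType already gives 1 != 0.) *)
Definition valuation_ring (R : comNzRingType) : Prop :=
  (forall x y : R, x * y = 0 -> x = 0 \/ y = 0) /\
  (forall x y : R, rdvd x y \/ rdvd y x).

Definition mixed_char (p : nat) (R : comNzRingType) : Prop :=
  (p%:R : R) != 0 /\ ~ (exists u : R, (p%:R : R) * u = 1).

(* a-adically complete (and separated): R -> lim R/a^n is bijective. *)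
Definition adically_complete (R : comNzRingType) (a : R) : Prop :=
  (forall x : R, (forall n, rdvd (a ^+ n) x) -> x = 0) /\
  (forall s : nat -> R, (forall n, rdvd (a ^+ n) (s n.+1 - s n)) ->
     exists x : R, forall n, rdvd (a ^+ n) (x - s n)).

(* iota : C -> Chat exhibits Chat as the p-adic completion of C:
   Chat is p-adically complete and separated, and iota induces
   isomorphisms C/p^n ~= Chat/p^n for all n.  (This characterizes
   lim_n C/p^n up to unique isomorphism.) *)
Definition is_p_completion (p : nat) (C Chat : comNzRingType)
    (iota : {rmorphism C -> Chat}) : Prop :=
  adically_complete (p%:R : Chat) /\
  (forall n (x : C), rdvd ((p%:R : Chat) ^+ n) (iota x) <-> rdvd ((p%:R : C) ^+ n) x) /\
  (forall n (y : Chat), exists x : C, cong ((p%:R : Chat) ^+ n) y (iota x)).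

(* Perfectoid ring (BMS, Def. 3.5), in the form of BMS Lemma 3.10 valid
   for p-torsion-free rings: there is pi with pi^p | p,
   S is pi-adically complete, and Frobenius S/pi -> S/pi^p is bijective. *)
Definition perfectoid_tf (p : nat) (S : comNzRingType) : Prop :=
  exists pi : S,
    rdvd (pi ^+ p) (p%:R : S) /\ adically_complete pi /\
    (forall x y : S, cong (pi ^+ p) (x ^+ p) (y ^+ p) -> cong pi x y) /\
    (forall y : S, exists x : S, cong (pi ^+ p) (x ^+ p) y).

(* pr : nat -> Cb -> C exhibits Cb as the tilt lim_{x |-> x^p} C/p:
   each pr n is (a set-theoretic lift of) a ring map Cb -> C/p, the maps
   are compatible along Frobenius, and x |-> (pr n x mod p)_n is a
   bijection of Cb onto the set of Frobenius-compatible sequences in C/p. *)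
Definition is_tilt (p : nat) (C Cb : comNzRingType) (pr : nat -> Cb -> C) : Prop :=
  let P := (p%:R : C) in
  (forall n x y, cong P (pr n (x + y)) (pr n x + pr n y)) /\
  (forall n x y, cong P (pr n (x * y)) (pr n x * pr n y)) /\
  (forall n, cong P (pr n 1) 1) /\
  (forall n x, cong P (pr n.+1 x ^+ p) (pr n x)) /\
  (forall x y, (forall n, cong P (pr n x) (pr n y)) -> x = y) /\
  (forall s : nat -> C, (forall n, cong P (s n.+1 ^+ p) (s n)) ->
     exists x, forall n, cong P (pr n x) (s n)).

(* The natural map Cb -> C/p, x |-> pr 0 x, is surjective with kernel dCb,
   i.e. it induces the natural isomorphism Cb/d ~= C/p. *)
Definition tilt_iso (p : nat) (C Cb : comNzRingType) (pr : nat -> Cb -> C) (d : Cb) : Prop :=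
  (forall x : Cb, rdvd (p%:R : C) (pr 0%N x) <-> rdvd d x) /\
  (forall c : C, exists x : Cb, cong (p%:R : C) (pr 0%N x) c).

(* Flatness of Eb over Cb via j, by the equational criterion
   (Stacks 00HK): every relation sum_i a_i m_i = 0 is trivial. *)
Definition flat_over (Cb Eb : comNzRingType) (j : {rmorphism Cb -> Eb}) : Prop :=
  forall n (a : 'I_n -> Cb) (m : 'I_n -> Eb),
    \sum_(i < n) j (a i) * m i = 0 ->
    exists k (b : 'I_n -> 'I_k -> Cb) (y : 'I_k -> Eb),
      (forall i, m i = \sum_(l < k) j (b i l) * y l) /\
      (forall l, \sum_(i < n) a i * b i l = 0).

(* phi : Eb -> E is (a set-theoretic lift of) an isomorphism of
   Cb/d = C/p - algebras  Eb/d ~= E/p, where Eb/d is a Cb/d-algebra via j,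
   E/p is a C/p-algebra via i, and Cb/d = C/p via pr 0. *)
Definition quot_alg_iso (p : nat) (C Cb E Eb : comNzRingType)
    (pr : nat -> Cb -> C) (i : {rmorphism C -> E}) (j : {rmorphism Cb -> Eb})
    (d : Cb) (phi : Eb -> E) : Prop :=
  let P := (p%:R : E) in
  (forall x y, cong P (phi (x + y)) (phi x + phi y)) /\
  (forall x y, cong P (phi (x * y)) (phi x * phi y)) /\
  cong P (phi 1) 1 /\
  (forall c : Cb, cong P (phi (j c)) (i (pr 0%N c))) /\
  (forall x : Eb, rdvd P (phi x) <-> rdvd (j d) x) /\
  (forall e : E, exists x : Eb, cong P (phi x) e).

(* The tilt [Cb] is a perfect domain: a zero product of nonzero elements would, at a
   deep enough level of the inverse system, give [p]-th roots mod [p] of elements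
   prime to [p] whose product is divisible by [p], which the valuation ring [C]
   forbids.  Moreover [d <> 0], since [Cb/d = C/p] is not reduced: the perfectoid
   completion provides an element of [C] prime to [p] with a power divisible by [p].
   Flatness then makes [j] injective and [Eb] [d]-torsion free.
   In [Eb], divisibility between images in [E/p] lifts modulo [D = j d].  As [D] has
   a [p]-th root [D1] and every [1 - D1 s] is a unit by [D]-adic completeness, [D1] is
   comparable with every element, hence so is [D = D1^p]; thus every [x] not divisible
   by [D] divides [D], and is comparable with every element.  Writing nonzero elements
   as [D^n x'] with [D] not dividing [x'] ([D]-adic separatedness) gives the
   valuation-ring axioms. *)

From HB Require Import structures.
From mathcomp Require Import all_boot all_order all_algebra.
From mathcomp Require Import ring.
From Stdlib Require Import Classical.
Set Implicit Arguments.
Unset Strict Implicit.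
Unset Printing Implicit Defensive.
Import GRing.Theory.
Local Open Scope ring_scope.

Section Divisibility.
Context {R : comNzRingType}.
Implicit Types a b c u v x y z : R.

Lemma rdvdrr a : rdvd a a. Proof. by exists 1; rewrite mul1r. Qed.

Lemma rdvdr0 a : rdvd a 0. Proof. by exists 0; rewrite mul0r. Qed.

Lemma rdvdr_trans a b c : rdvd a b -> rdvd b c -> rdvd a c.
Proof. by move=> [x ->] [y ->]; exists (y * x); rewrite mulrA. Qed.

Lemma rdvdr_mull a b c : rdvd a b -> rdvd a (c * b).
Proof. by move=> [x ->]; exists (c * x); rewrite mulrA. Qed.

Lemma rdvdr_mulr a b c : rdvd a b -> rdvd a (b * c).
Proof. by rewrite mulrC; apply: rdvdr_mull. Qed.

Lemma rdvdrD a b c : rdvd a b -> rdvd a c -> rdvd a (b + c).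
Proof. by move=> [x ->] [y ->]; exists (x + y); rewrite mulrDl. Qed.

Lemma rdvdrN a b : rdvd a b -> rdvd a (- b).
Proof. by move=> [x ->]; exists (- x); rewrite mulNr. Qed.

Lemma rdvdrB a b c : rdvd a b -> rdvd a c -> rdvd a (b - c).
Proof. by move=> ab ac; apply: rdvdrD ab (rdvdrN ac). Qed.

Lemma rdvdr_exp2l a m n : (m <= n)%N -> rdvd (a ^+ m) (a ^+ n).
Proof. by move=> le_mn; exists (a ^+ (n - m)); rewrite -exprD subnK. Qed.

Lemma rdvdr_exp2r a b n : rdvd a b -> rdvd (a ^+ n) (b ^+ n).
Proof. by move=> [x ->]; exists (x ^+ n); rewrite exprMn. Qed.

Lemma rdvdrX a b n : (0 < n)%N -> rdvd a b -> rdvd a (b ^+ n).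
Proof. by case: n => // n _ ab; rewrite exprS; apply: rdvdr_mulr. Qed.

Lemma rdvdr_mul2l a b c : rdvd a b -> rdvd (c * a) (c * b).
Proof. by move=> [x ->]; exists x; ring. Qed.

Lemma unit_rdvd a b : rdvd a b -> rdvd b 1 -> rdvd a 1.
Proof. exact: rdvdr_trans. Qed.

Lemma unit_mul a b : rdvd a 1 -> rdvd b 1 -> rdvd (a * b) 1.
Proof. by move=> [g ag] [h bh]; exists (g * h); rewrite -[1]mulr1 {1}ag bh; ring. Qed.

Lemma cong_refl a x : cong a x x.
Proof. by rewrite /cong subrr; apply: rdvdr0. Qed.

Lemma cong_sym a x y : cong a x y -> cong a y x.
Proof. by move=> xy; rewrite /cong -opprB; apply: rdvdrN. Qed.

Lemma cong_trans a x y z : cong a x y -> cong a y z -> cong a x z.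
Proof. by rewrite /cong => /rdvdrD H /H; rewrite addrA subrK. Qed.

Lemma congM a x y u v : cong a x y -> cong a u v -> cong a (x * u) (y * v).
Proof.
rewrite /cong => /(rdvdr_mulr u) H /(rdvdr_mull y) /(rdvdrD H).
by have -> : (x - y) * u + y * (u - v) = x * u - y * v by ring.
Qed.

Lemma congX a x y n : cong a x y -> cong a (x ^+ n) (y ^+ n).
Proof.
by move=> xy; elim: n => [|n IH]; [apply: cong_refl | rewrite !exprS; apply: congM].
Qed.

Lemma cong0 a x : cong a x 0 <-> rdvd a x.
Proof. by rewrite /cong subr0. Qed.

Lemma cong_rdvd a x y : cong a x y -> rdvd a y -> rdvd a x.
Proof. by rewrite /cong => /rdvdrD H /H; rewrite subrK. Qed.

Lemma mulr_1B_geom a n : (1 - a) * \sum_(k < n) a ^+ k = 1 - a ^+ n.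
Proof. by rewrite -[RHS]opprB subrX1 -mulNr opprB. Qed.

Lemma unit_1B_of_unit_1BX a n : rdvd (1 - a ^+ n) 1 -> rdvd (1 - a) 1.
Proof. by apply: unit_rdvd; exists (\sum_(k < n) a ^+ k); rewrite mulrC mulr_1B_geom. Qed.

Lemma rdvd_total_exp a :
  (forall y, rdvd a y \/ rdvd y a) -> forall k y, rdvd (a ^+ k) y \/ rdvd y (a ^+ k).
Proof.
move=> a_total; elim=> [|k IH] y; first by left; exists y; rewrite expr0 mulr1.
case: (IH y) => [[z ->]|ya]; last by right; rewrite exprS; apply: rdvdr_mull.
case: (a_total z) => [[w ->]|[w ->]].
- by left; exists w; rewrite exprS; ring.
- by right; exists w; rewrite exprS; ring.
Qed.

Definition no_zero_divisors := forall x y : R, x * y = 0 -> x = 0 \/ y = 0.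

Lemma nzd_mulf_neq0 x y : no_zero_divisors -> x != 0 -> y != 0 -> x * y != 0.
Proof. by move=> nzd /eqP x0 /eqP y0; apply/eqP => /nzd []. Qed.

Lemma nzd_mulfI a x y : no_zero_divisors -> a != 0 -> a * x = a * y -> x = y.
Proof.
move=> nzd /eqP a0 axy; have /nzd [//|/eqP] : a * (x - y) = 0 by rewrite mulrBr axy subrr.
by rewrite subr_eq0 => /eqP.
Qed.

End Divisibility.

Arguments no_zero_divisors : clear implicits.

Section AdicCompleteness.
Context {R : comNzRingType} (D : R).
Hypothesis D_complete : adically_complete D.

Lemma adic_unit_1B b : rdvd (1 - D * b) 1.
Proof.
case: D_complete => D_sep D_lim.
pose s n := \sum_(k < n) (D * b) ^+ k.
have [u u_lim] : exists u, forall n, rdvd (D ^+ n) (u - s n).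
  apply: D_lim => n; rewrite /s big_ord_recr /= addrAC subrr add0r exprMn.
  exact/rdvdr_mulr/rdvdrr.
exists u; apply/eqP; rewrite eq_sym mulrC -subr_eq0; apply/eqP/D_sep => n.
have -> : (1 - D * b) * u - 1 = (1 - D * b) * (u - s n) - (D * b) ^+ n.
  by rewrite mulrBr mulr_1B_geom; ring.
rewrite exprMn.
by apply: rdvdrB; [exact/rdvdr_mull/u_lim | exact/rdvdr_mulr/rdvdrr].
Qed.

Lemma adic_unit_1B_root a n s : a ^+ n = D -> rdvd (1 - a * s) 1.
Proof.
move=> aD; apply: (@unit_1B_of_unit_1BX _ _ n).
by rewrite exprMn aD; apply: adic_unit_1B.
Qed.

Lemma adic_decomp x : x <> 0 -> exists n x', x = D ^+ n * x' /\ ~ rdvd D x'.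
Proof.
move=> x0; have [N xN] : exists N, ~ rdvd (D ^+ N) x.
  apply: NNPP => xD; apply/x0/D_complete.1 => n.
  by apply: NNPP => xn; apply: xD; exists n.
elim: N x xN {x0} => [|N IH] x xN; first by case: xN; exists x; rewrite expr0 mulr1.
have [[x1 x1D]|Dx] := classic (rdvd D x); last by exists 0%N, x; rewrite expr0 mul1r.
have [|n [x' [x1n Dx']]] := IH x1.
  by move=> [z x1z]; apply: xN; exists z; rewrite x1D x1z exprSr mulrA.
by exists n.+1, x'; split=> //; rewrite x1D x1n exprS; ring.
Qed.

End AdicCompleteness.

Lemma regular_exp {R : comNzRingType} (D : R) :
  (forall z, D * z = 0 -> z = 0) -> forall n z, D ^+ n * z = 0 -> z = 0.
Proof.
by move=> D_reg; elim=> [|n IH] z; rewrite ?expr0 ?mul1r // exprSr -mulrA => /IH /D_reg.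
Qed.

Section ValuationRing.
Context {R : comNzRingType}.
Hypothesis R_val : valuation_ring R.
Implicit Types m P u v : R.

Lemma valuation_unit_1D m : ~ rdvd m 1 -> rdvd (1 + m) 1.
Proof.
move=> m_nunit; case: (R_val.2 (1 + m) m) => [[z mz]|[z mz]].
- by exists (1 - z); rewrite mulrBl mul1r -mz; ring.
- by case: m_nunit; exists (z - 1); rewrite mulrBl -mz; ring.
Qed.

Lemma valuation_ndvd_rdvd P u : ~ rdvd P u -> rdvd u P.
Proof. by case: (R_val.2 u P). Qed.

(* [v = (1 + t a) u], where [P = a u] and [a] is not a unit. *)
Lemma valuation_cong_assoc P u v : ~ rdvd P u -> cong P v u -> exists2 e, rdvd e 1 & v = e * u.
Proof.
move=> Pu [t vu]; have [a Pa] := valuation_ndvd_rdvd Pu.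
have a_nunit : ~ rdvd a 1.
  by move=> [g ga]; apply: Pu; exists g; rewrite Pa mulrA -ga mul1r.
exists (1 + t * a); last by rewrite -[v](subrK u) vu Pa; ring.
by apply: valuation_unit_1D => /(unit_rdvd (rdvdr_mull t (rdvdrr a))).
Qed.

(* [(u' v')^n] is [u v] times a unit, whereas [P^n] is a multiple of [P^2 = a b u v]
   with [a] not a unit. *)
Lemma valuation_ndvd_mul_roots n P u v u' v' : (1 < n)%N ->
  ~ rdvd P u -> ~ rdvd P v -> cong P (u' ^+ n) u -> cong P (v' ^+ n) v ->
  ~ rdvd P (u' * v').
Proof.
case: n => [|[|q]] // _ Pu Pv /(valuation_cong_assoc Pu) [e e_unit ue]
  /(valuation_cong_assoc Pv) [f f_unit vf] [w uvw].
have [a Pa] := valuation_ndvd_rdvd Pu; have [b Pb] := valuation_ndvd_rdvd Pv.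
have uv0 : u * v != 0.
  by apply: nzd_mulf_neq0 R_val.1 _ _; apply/eqP => u0; [apply: Pu | apply: Pv];
    rewrite u0; apply: rdvdr0.
have : (u * v) * (e * f) = (u * v) * (a * (b * w ^+ q.+2 * P ^+ q)).
  transitivity ((u' * v') ^+ q.+2); first by rewrite exprMn ue vf; ring.
  by rewrite uvw exprMn !exprS {2}Pa Pb; ring.
move=> /(nzd_mulfI R_val.1 uv0) ef_a; apply: Pu.
have [g ga] : rdvd a 1.
  by apply: unit_rdvd (unit_mul e_unit f_unit); exists (b * w ^+ q.+2 * P ^+ q); rewrite ef_a mulrC.
by exists g; rewrite -[u]mul1r ga -mulrA -Pa.
Qed.

End ValuationRing.

Section Tilt.
Variables (p : nat) (C Cb : comNzRingType) (pr : nat -> Cb -> C).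
Hypothesis tilt : is_tilt p pr.
Local Notation P := (p%:R : C).

Lemma tilt_pr0 n : rdvd P (pr n 0).
Proof.
case: tilt => prD _; have := prD n 0 0; rewrite addr0 /cong => /rdvdrN.
by have -> : - (pr n 0 - (pr n 0 + pr n 0)) = pr n 0 by ring.
Qed.

Lemma tilt_prX n x k : cong P (pr n (x ^+ k)) (pr n x ^+ k).
Proof.
case: tilt => _ [prM [pr1 _]]; elim: k => [|k IH]; first by rewrite !expr0; apply: pr1.
by rewrite !exprS; apply: cong_trans (prM _ _ _) (congM (cong_refl _ _) IH).
Qed.

Lemma tilt_pr_eq0 x : (forall n, rdvd P (pr n x)) -> x = 0.
Proof.
case: tilt => _ [_ [_ [_ [pr_inj _]]]] Px; apply: pr_inj => n.
exact: cong_trans ((cong0 _ _).2 (Px n)) (cong_sym ((cong0 _ _).2 (tilt_pr0 n))).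
Qed.

Lemma tilt_reduced (x : Cb) : x ^+ p = 0 -> x = 0.
Proof.
case: tilt => _ [_ [_ [prF _]]] xp0; apply: tilt_pr_eq0 => n.
apply: cong_rdvd (cong_sym (prF n x)) _; apply: cong_rdvd (cong_sym (tilt_prX _ _ _)) _.
by rewrite xp0; apply: tilt_pr0.
Qed.

Lemma tilt_root (x : Cb) : exists y, y ^+ p = x.
Proof.
case: tilt => _ [_ [_ [prF [pr_inj pr_surj]]]].
have [y y_pr] := pr_surj (fun n => pr n.+1 x) (fun n => prF n.+1 x).
exists y; apply: pr_inj => n.
exact: cong_trans (tilt_prX _ _ _) (cong_trans (congX _ (y_pr n)) (prF n x)).
Qed.

Lemma tilt_pr_ndvd_mono x n m : (0 < p)%N -> (n <= m)%N ->
  ~ rdvd P (pr n x) -> ~ rdvd P (pr m x).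
Proof.
case: tilt => _ [_ [_ [prF _]]] p_gt0; elim: m => [|m IH]; first by rewrite leqn0 => /eqP ->.
rewrite leq_eqVlt => /orP [/eqP -> //|le_nm Pn Pm1]; apply: (IH le_nm Pn).
exact: cong_rdvd (cong_sym (prF m x)) (rdvdrX p_gt0 Pm1).
Qed.

(* [x y = 0] with [x, y] nonzero would make [pr (K+1) x * pr (K+1) y] divisible by [p]
   although these are [p]-th roots mod [p] of elements not divisible by [p]. *)
Lemma tilt_no_zero_divisors : (1 < p)%N -> valuation_ring C -> no_zero_divisors Cb.
Proof.
move=> p_gt1 C_val x y xy0; case: tilt => _ [prM [_ [prF _]]].
apply: NNPP => /not_or_and [x0 y0].
have [N PxN] : exists N, ~ rdvd P (pr N x).
  by apply: NNPP => Px; apply/x0/tilt_pr_eq0 => n; apply: NNPP => Pxn; apply: Px; exists n.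
have [M PyM] : exists M, ~ rdvd P (pr M y).
  by apply: NNPP => Py; apply/y0/tilt_pr_eq0 => n; apply: NNPP => Pyn; apply: Py; exists n.
have p_gt0 := ltnW p_gt1; pose K := maxn N M.
have PxK := tilt_pr_ndvd_mono p_gt0 (leq_maxl N M) PxN.
have PyK := tilt_pr_ndvd_mono p_gt0 (leq_maxr N M) PyM.
apply: (valuation_ndvd_mul_roots C_val p_gt1 PxK PyK (prF K x) (prF K y)).
by apply: cong_rdvd (cong_sym (prM K.+1 x y)) _; rewrite xy0; apply: tilt_pr0.
Qed.

Lemma tilt_iso0_reduced_mod_p : (1 < p)%N -> tilt_iso p pr 0 ->
  forall y n, rdvd P (y ^+ n) -> rdvd P y.
Proof.
move=> p_gt1 [pr0_ker pr0_surj].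
have frob_red y : rdvd P (y ^+ p) -> rdvd P y.
  have [x xy] := pr0_surj y; move=> Pyp.
  have /pr0_ker [z] : rdvd P (pr 0 (x ^+ p)).
    exact: cong_rdvd (tilt_prX _ _ _) (cong_rdvd (congX _ xy) Pyp).
  rewrite mulr0 => /tilt_reduced x0.
  by apply: cong_rdvd (cong_sym xy) _; rewrite x0; apply: tilt_pr0.
move=> y n Pyn; suff Pyk k : rdvd P (y ^+ (p ^ k)) -> rdvd P y.
  by apply: (Pyk n); apply: rdvdr_trans Pyn (rdvdr_exp2l _ (ltnW (ltn_expl n p_gt1))).
elim: k => [|k IH]; first by rewrite expn0 expr1.
by rewrite expnSr exprM => /frob_red.
Qed.

End Tilt.

(* Lift to [C] a [pi] with [pi^p | p] in the completion: [p] does not divide it, yet if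
   no power of it were divisible by [p], all its powers would divide [p] in the
   valuation ring [C], so [p] would be [pi]-adically infinitely divisible, i.e. zero. *)
Lemma perfectoid_completion_nilpotent_mod_p (p : nat) (C Chat : comNzRingType)
    (iota : {rmorphism C -> Chat}) :
  (1 < p)%N -> valuation_ring C -> mixed_char p C ->
  is_p_completion p iota -> perfectoid_tf p Chat ->
  exists c : C, ~ rdvd (p%:R : C) c /\ exists n, rdvd (p%:R : C) (c ^+ n).
Proof.
move=> p_gt1 C_val [p_neq0 p_nunit] [_ [iota_rdvd iota_surj]] [pi [pi_p [pi_sep _]]].
have p_sq_ndvd : ~ rdvd ((p%:R : Chat) ^+ 2) p%:R.
  move=> pp; have := (iota_rdvd 2%N p%:R).1; rewrite rmorph_nat => /(_ pp) [z pz].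
  apply: p_nunit; exists z; apply: (nzd_mulfI C_val.1 p_neq0).
  by rewrite mulr1 [RHS]pz; ring.
have pi_ndvd : ~ rdvd (p%:R : Chat) pi.
  move=> /(rdvdr_exp2r p) /rdvdr_trans /(_ pi_p) pp; apply: p_sq_ndvd.
  exact: rdvdr_trans (rdvdr_exp2l _ p_gt1) pp.
have [c pi_c] := iota_surj 1%N pi; rewrite expr1 in pi_c.
exists c; split.
  by move=> /(iota_rdvd 1%N c).2; rewrite !expr1 => /(cong_rdvd pi_c).
apply: NNPP => c_nnil; apply: p_sq_ndvd; suff -> : (p%:R : Chat) = 0 by apply: rdvdr0.
apply: pi_sep.1 => n; have [a ca] : rdvd (c ^+ n) p%:R.
  by apply: (valuation_ndvd_rdvd C_val) => Pcn; apply: c_nnil; exists n.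
have pi_iota_c : rdvd pi (iota c).
  have pi_P := rdvdr_trans (rdvdrX (ltnW p_gt1) (rdvdrr pi)) pi_p.
  have -> : iota c = pi - (pi - iota c) by ring.
  exact: rdvdrB (rdvdrr pi) (rdvdr_trans pi_P pi_c).
have := congr1 iota ca; rewrite rmorph_nat rmorphM rmorphXn => ->.
exact/rdvdr_mull/rdvdr_exp2r.
Qed.

Lemma tilt_d_neq0 (p : nat) (C Chat Cb : comNzRingType) (iota : {rmorphism C -> Chat})
    (pr : nat -> Cb -> C) (d : Cb) :
  (1 < p)%N -> valuation_ring C -> mixed_char p C ->
  is_p_completion p iota -> perfectoid_tf p Chat ->
  is_tilt p pr -> tilt_iso p pr d -> d != 0.
Proof.
move=> p_gt1 C_val Cmix Ccompl Cperf tilt d_iso; apply/eqP => d0; rewrite d0 in d_iso.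
have [c [Pc [n Pcn]]] := perfectoid_completion_nilpotent_mod_p p_gt1 C_val Cmix Ccompl Cperf.
exact/Pc/(tilt_iso0_reduced_mod_p tilt p_gt1 d_iso Pcn).
Qed.

Section LiftValuationRing.
Variables (E Eb : comNzRingType) (P : E) (D : Eb) (phi : Eb -> E).
Hypothesis phiD : forall x y, cong P (phi (x + y)) (phi x + phi y).
Hypothesis phiM : forall x y, cong P (phi (x * y)) (phi x * phi y).
Hypothesis phi_ker : forall x, rdvd P (phi x) <-> rdvd D x.
Hypothesis phi_surj : forall e, exists x, cong P (phi x) e.
Hypothesis E_val : valuation_ring E.

Lemma phi_lift a b : rdvd (phi a) (phi b) -> exists w, rdvd D (b - w * a).
Proof.
move=> [e be]; have [w we] := phi_surj e; exists w; apply/phi_ker.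
have phi_b : cong P (phi (b - w * a) + phi (w * a)) (phi b).
  by have := phiD (b - w * a) (w * a); rewrite subrK => /cong_sym.
have phi_wa : cong P (phi (w * a)) (phi b).
  by rewrite be; apply: cong_trans (phiM w a) (congM we (cong_refl _ _)).
have -> : phi (b - w * a) = phi (b - w * a) + phi (w * a) - phi b - (phi (w * a) - phi b).
  by ring.
exact: rdvdrB phi_b phi_wa.
Qed.

Lemma rdvd_of_phi a b : rdvd a D -> rdvd (phi a) (phi b) -> rdvd a b.
Proof.
move=> aD /phi_lift [w /(rdvdr_trans aD) a_bwa].
have -> : b = b - w * a + w * a by ring.
exact: rdvdrD a_bwa (rdvdr_mull w (rdvdrr a)).
Qed.

Variables (p : nat) (D1 : Eb).
Hypothesis p_gt1 : (1 < p)%N.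
Hypothesis D1p : D1 ^+ p = D.
Hypothesis D_complete : adically_complete D.

(* If [phi y | phi D1] then [D1 = w y + t D1^p], and [1 - t D1^(p-1)] is a unit. *)
Lemma root_rdvd_total y : rdvd D1 y \/ rdvd y D1.
Proof.
have D1q : D1 ^+ (p - 2).+2 = D by rewrite -addn2 subnK.
move: (p - 2)%N D1q => q D1q.
case: (E_val.2 (phi D1) (phi y)) => [D1y|/phi_lift [w [t wy]]]; [left | right].
  by apply: rdvd_of_phi D1y; exists (D1 ^+ q.+1); rewrite -D1q exprSr.
have [u u_unit] := adic_unit_1B_root D_complete (t * D1 ^+ q) D1q.
have D1_wy : D1 * (1 - D1 * (t * D1 ^+ q)) = w * y.
  have -> : w * y = D1 - t * D by rewrite -wy; ring.
  by rewrite -D1q !exprS; ring.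
by exists (u * w); rewrite -mulrA -D1_wy mulrCA -u_unit mulr1.
Qed.

Lemma ndvd_rdvd x : ~ rdvd D x -> rdvd x D.
Proof. by case: (rdvd_total_exp root_rdvd_total p x); rewrite D1p. Qed.

Lemma rdvd_total_of_ndvd x y : ~ rdvd D x -> rdvd x y \/ rdvd y x.
Proof.
move=> Dx; case: (E_val.2 (phi x) (phi y)) => [xy|yx].
  by left; apply: rdvd_of_phi (ndvd_rdvd Dx) xy.
have [w Dxwy] := phi_lift yx.
right; apply: rdvd_of_phi yx; apply: ndvd_rdvd => Dy; apply: Dx.
have -> : x = x - w * y + w * y by ring.
exact: rdvdrD Dxwy (rdvdr_mull w Dy).
Qed.

Hypothesis D_reg : forall z, D * z = 0 -> z = 0.

Lemma valuation_ring_of_lift : valuation_ring Eb.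
Proof.
split.
  move=> x y xy0; have [x0|x0] := classic (x = 0); [by left | right].
  have [n [x' [xn Dx']]] := adic_decomp D_complete x0.
  have [s Ds] := ndvd_rdvd Dx'; apply: D_reg; rewrite Ds -mulrA.
  by rewrite (@regular_exp _ D D_reg n (x' * y)) ?mulr0 // mulrA -xn.
move=> x y; have [->|x0] := classic (x = 0); first by right; apply: rdvdr0.
have [->|y0] := classic (y = 0); first by left; apply: rdvdr0.
have [n [x' [-> Dx']]] := adic_decomp D_complete x0.
have [m [y' [-> Dy']]] := adic_decomp D_complete y0.
wlog le_nm : n m x' y' Dx' Dy' / (n <= m)%N.
  move=> wlog_nm; case: (leqP n m) => [|/ltnW]; first exact: wlog_nm.
  by move=> /(wlog_nm m n y' x' Dy' Dx') []; auto.
have -> : D ^+ m * y' = D ^+ n * (D ^+ (m - n) * y') by rewrite mulrA -exprD subnKC.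
by case: (rdvd_total_of_ndvd (D ^+ (m - n) * y') Dx') => /(rdvdr_mul2l (D ^+ n)); auto.
Qed.

End LiftValuationRing.

Section Flatness.
Variables (Cb Eb : comNzRingType) (j : {rmorphism Cb -> Eb}).
Hypothesis j_flat : flat_over j.
Hypothesis Cb_nzd : no_zero_divisors Cb.

Lemma flat_regular (a : Cb) (z : Eb) : a != 0 -> j a * z = 0 -> z = 0.
Proof.
move=> a0 az0; have := @j_flat 1%N (fun _ => a) (fun _ => z).
rewrite big_ord1 => /(_ az0) [k [b [y [zb ab]]]].
rewrite (zb ord0); apply: big1 => l _.
have := ab l; rewrite big_ord1 => /Cb_nzd [a0'|->]; last by rewrite rmorph0 mul0r.
by move: a0; rewrite a0' eqxx.
Qed.

Lemma flat_injective : injective j.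
Proof.
move=> x y jxy; apply/eqP; rewrite -subr_eq0; apply/negPn/negP => xy0.
have := @flat_regular (x - y) 1 xy0; rewrite rmorphB jxy subrr mul0r => /(_ erefl) /eqP.
by rewrite oner_eq0.
Qed.

End Flatness.

Theorem lemma3p13 (p : nat) (hp : prime p)
  (C : comNzRingType) (HC : valuation_ring C) (Hmix : mixed_char p C)
  (Chat : comNzRingType) (iota : {rmorphism C -> Chat})
  (Hcompl : is_p_completion p iota) (Hperf : perfectoid_tf p Chat)
  (Cb : comNzRingType) (pr : nat -> Cb -> C) (Htilt : is_tilt p pr)
  (d : Cb) (Hd : adically_complete d) (Hnat : tilt_iso p pr d)
  (E : comNzRingType) (i : {rmorphism C -> E}) (HE : valuation_ring E)
  (Hi : injective i)
  (Eb : comNzRingType) (j : {rmorphism Cb -> Eb}) (Hflat : flat_over j)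
  (HEb : adically_complete (j d))
  (Hiso : exists phi : Eb -> E, quot_alg_iso p pr i j d phi) :
  valuation_ring Eb /\ injective j.
Proof.
have p_gt1 := prime_gt1 hp.
have Cb_nzd := tilt_no_zero_divisors Htilt p_gt1 HC.
have d_neq0 := tilt_d_neq0 p_gt1 HC Hmix Hcompl Hperf Htilt Hnat.
have [d1 d1p] := tilt_root Htilt d.
have jd1p : j d1 ^+ p = j d by rewrite -rmorphXn d1p.
have [phi [phiD [phiM [_ [_ [phi_ker phi_surj]]]]]] := Hiso.
split; last exact: flat_injective Hflat Cb_nzd.
apply: (valuation_ring_of_lift phiD phiM phi_ker phi_surj HE p_gt1 jd1p HEb).
by move=> z; apply: (flat_regular Hflat Cb_nzd d_neq0).
Qed.
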